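(* For every $\gamma\in(0,1)$, $$\sum_{n=0}^{\infty}2^n\gamma^{2^n}\le\frac{1}{\ln\frac{1}{\gamma}}\left(\frac{1}{e}+\frac{\gamma}{\ln 2}\right).$$ *)

From Stdlib Require Import Reals.
From Coquelicot Require Import Coquelicot.

From Stdlib Require Import Reals.
From Coquelicot Require Import Coquelicot.
From Stdlib Require Import Lra Psatz.
Open Scope R_scope.

(* With L = ln (1/g), the n-th term is phi (2^n L) / L for phi x = x e^{-x}
   ([xexp_neg]), so it suffices to show  sum_k phi (2^k L) <= 1/e + e^{-L} / ln 2
   for every L > 0.
   Induct on the number of terms, for all L at once.  For small L the head term
   is absorbed by the change of the right-hand side between 2L and L:
   L e^{-L} + e^{-2L} / ln 2 <= e^{-L} / ln 2.  For large L the whole sum is at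
   most phi L + e^{-L} / ln 2, because then 2L e^{-2L} + e^{-2L} / ln 2 <= e^{-L} / ln 2,
   and phi L <= 1/e.  The threshold 0.7 lies in the window where both
   inequalities hold. *)

Definition xexp_neg (x : R) : R := x * exp (- x).

Lemma xexp_neg_ge0 (x : R) : 0 <= x -> 0 <= xexp_neg x.
Proof. intros hx. unfold xexp_neg. pose proof (exp_pos (- x)). nra. Qed.

Lemma xexp_neg_le_inv_e (x : R) : xexp_neg x <= / exp 1.
Proof.
  unfold xexp_neg. apply Rle_trans with (exp (x - 1) * exp (- x)).
  - apply Rmult_le_compat_r; [apply Rlt_le, exp_pos|].
    pose proof (exp_ineq1_le (x - 1)). lra.
  - rewrite <- exp_plus, <- exp_Ropp. right. f_equal. ring.
Qed.

Lemma exp_ge_taylor3 (x : R) : 0 <= x -> 1 + x + x ^ 2 / 2 + x ^ 3 / 6 <= exp x.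
Proof.
  intros hx. pose proof (exp_ge_taylor x 3 hx) as H.
  simpl in H. unfold Rdiv in *. lra.
Qed.

Lemma ln2_gt0 : 0 < ln 2.
Proof. pose proof ln_lt_2. lra. Qed.

Lemma exp_div_ln2_ge0 (x : R) : 0 <= exp x / ln 2.
Proof. apply Rdiv_le_0_compat; [apply Rlt_le, exp_pos | apply ln2_gt0]. Qed.

Lemma ln2_lt_7_10 : ln 2 < 0.7.
Proof.
  rewrite <- (ln_exp 0.7). apply ln_increasing; [lra|].
  pose proof (exp_ge_taylor 0.7 4 ltac:(lra)) as H.
  simpl in H. lra.
Qed.

Lemma exp_neg_le_1_sub_ln2 (L : R) : 0 <= L <= 0.7 -> exp (- L) <= 1 - ln 2 * L.
Proof.
  intros hL. pose proof ln2_gt0. pose proof ln2_lt_7_10.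
  pose proof (exp_ge_taylor3 L ltac:(lra)) as hE.
  set (P := 1 + L + L ^ 2 / 2 + L ^ 3 / 6) in *.
  assert (hP0 : 0 < P) by (unfold P; nra).
  assert (hP7 : 1 <= P * (1 - 0.7 * L)).
  { assert (L ^ 2 <= 0.49) by nra. assert (L ^ 3 <= 0.343) by nra.
    assert (0 <= L * (0.3 - 0.2 * L - 11 / 60 * L ^ 2 - 7 / 60 * L ^ 3)) by nra.
    unfold P. nra. }
  assert (hP : 1 <= P * (1 - ln 2 * L)).
  { assert (0 <= P * ((0.7 - ln 2) * L)) by (apply Rmult_le_pos; nra). nra. }
  rewrite exp_Ropp. pose proof (exp_pos L).
  apply (Rmult_le_reg_l (exp L)); [lra|].
  rewrite Rinv_r by lra. nra.
Qed.

Lemma one_add_2ln2_le_exp (L : R) : 0.7 <= L -> 1 + 2 * ln 2 * L <= exp L.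
Proof.
  intros hL. pose proof ln2_lt_7_10.
  pose proof (exp_ge_taylor3 L ltac:(lra)). nra.
Qed.

Lemma exp_neg_double (L : R) : exp (- (2 * L)) = exp (- L) * exp (- L).
Proof. rewrite <- exp_plus. f_equal. ring. Qed.

Lemma dyadic_step_small (L : R) : 0 <= L <= 0.7 ->
  xexp_neg L + exp (- (2 * L)) / ln 2 <= exp (- L) / ln 2.
Proof.
  intros hL. unfold xexp_neg. rewrite exp_neg_double.
  pose proof ln2_gt0.
  pose proof (exp_neg_le_1_sub_ln2 L hL).
  replace (L * exp (- L) + exp (- L) * exp (- L) / ln 2)
    with (exp (- L) / ln 2 * (ln 2 * L + exp (- L))) by (field; lra).
  rewrite <- (Rmult_1_r (exp (- L) / ln 2)) at 2.
  apply Rmult_le_compat_l; [apply exp_div_ln2_ge0 | lra].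
Qed.

Lemma dyadic_step_large (L : R) : 0.7 <= L ->
  xexp_neg (2 * L) + exp (- (2 * L)) / ln 2 <= exp (- L) / ln 2.
Proof.
  intros hL. unfold xexp_neg. rewrite exp_neg_double.
  pose proof ln2_gt0. pose proof (exp_pos (- L)).
  pose proof (one_add_2ln2_le_exp L hL).
  assert (hinv : exp (- L) * exp L = 1)
    by (rewrite <- exp_plus, Rplus_opp_l; apply exp_0).
  assert (exp (- L) * (1 + 2 * ln 2 * L) <= 1)
    by (rewrite <- hinv; apply Rmult_le_compat_l; lra).
  replace (2 * L * (exp (- L) * exp (- L)) + exp (- L) * exp (- L) / ln 2)
    with (exp (- L) / ln 2 * (exp (- L) * (1 + 2 * ln 2 * L))) by (field; lra).
  rewrite <- (Rmult_1_r (exp (- L) / ln 2)) at 2.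
  apply Rmult_le_compat_l; [apply exp_div_ln2_ge0 | lra].
Qed.

Lemma sum_n_dyadic_S (f : R -> R) (L : R) (N : nat) :
  sum_n (fun k => f (L * 2 ^ k)) (S N)
  = f L + sum_n (fun k => f (2 * L * 2 ^ k)) N.
Proof.
  unfold sum_n. rewrite sum_Sn_m by lia. rewrite <- sum_n_m_S.
  simpl. rewrite Rmult_1_r. unfold plus; simpl. f_equal.
  apply sum_n_m_ext. intros k. f_equal. ring.
Qed.

Lemma dyadic_sum_le_large (N : nat) : forall L : R, 0.7 <= L ->
  sum_n (fun k => xexp_neg (L * 2 ^ k)) N <= xexp_neg L + exp (- L) / ln 2.
Proof.
  induction N as [|N IH]; intros L hL.
  - rewrite sum_O, pow_O, Rmult_1_r.
    pose proof (exp_div_ln2_ge0 (- L)). lra.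
  - rewrite sum_n_dyadic_S.
    pose proof (IH (2 * L) ltac:(lra)). pose proof (dyadic_step_large L hL).
    lra.
Qed.

Lemma dyadic_sum_le (N : nat) : forall L : R, 0 < L ->
  sum_n (fun k => xexp_neg (L * 2 ^ k)) N <= / exp 1 + exp (- L) / ln 2.
Proof.
  induction N as [|N IH]; intros L hL.
  - rewrite sum_O, pow_O, Rmult_1_r.
    pose proof (xexp_neg_le_inv_e L). pose proof (exp_div_ln2_ge0 (- L)).
    lra.
  - destruct (Rle_dec L 0.7) as [hsmall | hlarge].
    + rewrite sum_n_dyadic_S.
      pose proof (IH (2 * L) ltac:(lra)). pose proof (dyadic_step_small L ltac:(lra)).
      lra.
    + pose proof (dyadic_sum_le_large (S N) L ltac:(lra)).
      pose proof (xexp_neg_le_inv_e L). lra.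
Qed.

Lemma series_nonneg_bounded (a : nat -> R) (M : R) :
  (forall n, 0 <= a n) -> (forall N, sum_n a N <= M) ->
  ex_series a /\ Series a <= M.
Proof.
  intros ha hM.
  assert (hincr : forall N, sum_n a N <= sum_n a (S N)).
  { intros N. rewrite sum_Sn. unfold plus; simpl. pose proof (ha (S N)). lra. }
  destruct (ex_finite_lim_seq_incr _ M hincr hM) as [l hl].
  assert (hser : is_series a l) by exact hl.
  split; [exists l; exact hser|].
  rewrite (is_series_unique a l hser).
  exact (is_lim_seq_le _ _ _ _ hM hl (is_lim_seq_const M)).
Qed.

Lemma pow_exp (x : R) (n : nat) : exp x ^ n = exp (INR n * x).
Proof.
  rewrite <- Rpower_pow by apply exp_pos. unfold Rpower. rewrite ln_exp. reflexivity.
Qed.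

Lemma dyadic_term_eq (L : R) (k : nat) : L <> 0 ->
  2 ^ k * exp (- L) ^ (2 ^ k)%nat = / L * xexp_neg (L * 2 ^ k).
Proof.
  intros hL. unfold xexp_neg. rewrite pow_exp, pow_INR.
  replace (INR 2) with 2 by reflexivity.
  replace (2 ^ k * - L) with (- (L * 2 ^ k)) by ring.
  field. exact hL.
Qed.

Theorem lemma4 (g : R) (hg0 : 0 < g) (hg1 : g < 1) :
  ex_series (fun n : nat => 2 ^ n * g ^ (2 ^ n)%nat) /\
  Series (fun n : nat => 2 ^ n * g ^ (2 ^ n)%nat)
    <= / ln (/ g) * (/ exp 1 + g / ln 2).
Proof.
  set (L := ln (/ g)).
  assert (hL : 0 < L).
  { unfold L. rewrite <- ln_1. apply ln_increasing; [lra|].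
    rewrite <- Rinv_1. apply Rinv_lt_contravar; lra. }
  assert (hg : g = exp (- L)).
  { unfold L. rewrite ln_Rinv, Ropp_involutive, exp_ln; lra. }
  rewrite hg.
  apply series_nonneg_bounded.
  - intros n. rewrite dyadic_term_eq by lra.
    apply Rmult_le_pos.
    + apply Rlt_le, Rinv_0_lt_compat, hL.
    + apply xexp_neg_ge0. pose proof (pow_lt 2 n). nra.
  - intros N. rewrite (sum_n_ext _ (fun k => scal (/ L) (xexp_neg (L * 2 ^ k))))
      by (intros k; apply dyadic_term_eq; lra).
    rewrite sum_n_scal_l.
    apply Rmult_le_compat_l; [apply Rlt_le, Rinv_0_lt_compat, hL|].
    apply dyadic_sum_le, hL.
Qed.
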